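(* Let $\mathcal{K}$ be a flat Kripke structure, $\Phi=\varphi\,\mathtt{U}^{\frac{x}{y}}\psi$ an $\mathtt{fLTL}$ formula (with $x\le y$, $y>0$), and $\mathcal{P}=(P_0,\dots,P_m)$ an augmented path schema in $\mathcal{K}$ that is consistent with respect to $\varphi$ and with respect to $\psi$. Let $P=P_k$ with $k<m$ be a loop of $\mathcal{P}$ (a non-terminal loop), let $v=\ell_0\ell_1\dots\ell_{|P|-1}$ be its sequence of locations, and let $\hat n=|P|\cdot y$. Then for every run $\sigma\in\mathtt{Runs}(\mathcal{P})$ of the form $\sigma=uv^nw$ (with $u$ a finite and $w$ an infinite sequence of locations) where $n\ge\hat n+2$, there are $n_1,n_2\in\mathbb{N}$ with $n=n_1+\hat n+n_2$ (so $\sigma=uv^{n_1}v^{\hat n}v^{n_2}w$) such that for all positions $i$ on $\sigma$ with $|u|\le i<|u|+(n_1-1)|P|$ or $|u|+(n_1+\hat n)|P|\le i<|u|+(n_1+\hat n+n_2-2)|P|$ we have $(\sigma,i)\models_\mathcal{P}\Phi$ if and only if $(\sigma,i+|P|)\models_\mathcal{P}\Phi$.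
   Context: Kripke structure: $\mathcal{K}=(S,s_I,E,\lambda)$ with finite $S$, $s_I\in S$, $E\subseteq S\times S$, $\lambda:S\to2^{AP}$ for a finite set $AP$. A simple loop is a finite path $s_0\dots s_k$ of pairwise distinct states with $(s_k,s_0)\in E$; $\mathcal{K}$ is flat if every state is the first state of at most one simple loop. $\mathtt{fLTL}$: $\varphi ::= p\mid\varphi\land\varphi\mid\neg\varphi\mid\mathtt{X}\varphi\mid\varphi\,\mathtt{U}^{\frac{x}{y}}\varphi$ with $p\in AP$, $x\le y$ naturals, $y>0$; $\mathtt{sub}(\Phi)$ denotes subformulae (assume $AP\subseteq\mathtt{sub}(\Phi)$). Over an infinite state sequence $\rho$ and position $i$: $(\rho,i)\models p$ iff $p\in\lambda(\rho(i))$; Booleans as usual; $(\rho,i)\models\mathtt{X}\varphi$ iff $(\rho,i+1)\models\varphi$; $(\rho,i)\models\varphi\,\mathtt{U}^{\frac{x}{y}}\psi$ iff $(\rho,i)\models\psi$ or there is $k\ge i$ with $(\rho,k+1)\models\psi$ and $y\cdot|\{j\in[i,k]\mid(\rho,j)\models\varphi\}|\ge x(k-i+1)$. Counter system: $(Q,q_I,C,\Delta)$, $C$ finite set of counters, $\Delta\subseteq Q\times\mathbb{Z}^C\times2^{\mathrm{G}(C)}\times Q$, $\mathrm{G}(C)=\{(c<0),(c\ge0)\mid c\in C\}$; a run is $q_0q_1\dots$ with $q_0=q_I$ such that there are valuations $\theta_0=\mathbf{0},\theta_1,\dots$ and transitions $(q_i,\mathbf{u}_i,G_i,q_{i+1})\in\Delta$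 with $\theta_{i+1}=\theta_i+\mathbf{u}_i$ satisfying all guards in $G_i$. Augmented state $a=(s,L,G,\mathbf{u},t)\in S\times2^{\mathtt{sub}(\Phi)}\times2^{\mathrm{G}(C)}\times\mathbb{Z}^C\times\{\mathtt{L},\mathtt{R}\}$ with projections $\mathtt{st},\mathtt{lab},\mathtt{g},\mathtt{u},\mathtt{t}$. Augmented path: $a_0\dots a_n$ with $(\mathtt{st}(a_i),\mathtt{st}(a_{i+1}))\in E$; row: all types $\mathtt{R}$; loop: non-empty, $(\mathtt{st}(a_n),\mathtt{st}(a_0))\in E$, states pairwise distinct, all types $\mathtt{L}$. APS in $\mathcal{K}$: $\mathcal{P}=(P_0,\dots,P_m)$ of rows and loops, $P_m$ a loop, $P_0\dots P_m$ an augmented path. Locations are indices $\ell\in[0,|\mathcal{P}|-1]$ into $P_0\dots P_m$; $\mathcal{P}[\ell]$ the augmented state there; $\mathtt{loc}_\mathcal{P}(k)$ the locations of $P_k$; $\mathtt{lab}_\mathcal{P}(\ell)=\mathtt{lab}(\mathcal{P}[\ell])$, etc. $\mathtt{CS}(\mathcal{P})=(\{0,\dots,|\mathcal{P}|-1\},0,C,\Delta)$ with transitions $(\ell,\mathtt{u}_\mathcal{P}(\ell),\mathtt{g}_\mathcal{P}(\ell'),\ell')$ whenever $\ell'=\ell+1<|\mathcal{P}|$, or $\ell'<\ell$ and $\{\ell',\dots,\ell\}=\mathtt{loc}_\mathcal{P}(k)$ for a loop $P_k$; $\mathtt{succ}_\mathcal{P}(\ell)$ are the one-step successors. $\mathtt{Runs}(\mathcal{P})$: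 runs of $\mathtt{CS}(\mathcal{P})$ visiting every location at least once. For $\sigma\in\mathtt{Runs}(\mathcal{P})$, $(\sigma,i)\models_\mathcal{P}\varphi$ iff $(\mathtt{st}_\mathcal{P}(\sigma),i)\models\varphi$, where $\mathtt{st}_\mathcal{P}(\sigma)$ is the state sequence $\mathtt{st}(\mathcal{P}[\sigma(0)])\mathtt{st}(\mathcal{P}[\sigma(1)])\dots$. For $\Psi=\alpha\,\mathtt{U}^{\frac{x}{y}}\beta$, an augmented path $u$ is good/neutral/bad for $\Psi$ if $|\{i<|u|\mid\alpha\in\mathtt{lab}(u(i))\}|$ is $>,=,<\frac{x}{y}|u|$. A tuple of augmented paths is $L$-periodic if all have the same length and for every index $i$ the sets $\mathtt{lab}(P(i))\cap L$ coincide over all members $P$. Consistency: for $\ell\in\mathtt{loc}_\mathcal{P}(k)$, $\ell$ is consistent w.r.t. $\Psi$ if all locations are consistent w.r.t. all strict subformulae of $\Psi$ and: (1) $\Psi\in AP$ and ($\Psi\in\mathtt{lab}_\mathcal{P}(\ell)\Leftrightarrow\Psi\in\lambda(\mathtt{st}_\mathcal{P}(\ell))$), or $\Psi=\alpha\land\beta$ and ($\Psi\in\mathtt{lab}_\mathcal{P}(\ell)\Leftrightarrow\alpha,\beta\in\mathtt{lab}_\mathcal{P}(\ell)$), or $\Psi=\neg\alpha$ and ($\Psi\in\mathtt{lab}_\mathcal{P}(\ell)\Leftrightarrow\alpha\notin\mathtt{lab}_\mathcal{P}(\ell)$); (2) $\Psi=\mathtt{X}\alpha$ and for all $\ell'\in\mathtt{succ}_\mathcal{P}(\ell)$: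 $\Psi\in\mathtt{lab}_\mathcal{P}(\ell)\Leftrightarrow\alpha\in\mathtt{lab}_\mathcal{P}(\ell')$; (3) $\Psi=\alpha\,\mathtt{U}^{\frac{x}{y}}\beta$ and one of: (a) $\Psi,\beta\in\mathtt{lab}_\mathcal{P}(\ell)$; (b) $\Psi\in\mathtt{lab}_\mathcal{P}(\ell)$, the last component is good for $\Psi$ and contains a location labelled $\beta$; (c) $\mathtt{t}_\mathcal{P}(\ell)=\mathtt{R}$ and some counter $c$ has update $0$ at all $\ell'<\ell$, $y-x$ at all $\ell'\ge\ell$ labelled $\alpha$, $-x$ at all $\ell'\ge\ell$ not labelled $\alpha$, and: if $\Psi\notin\mathtt{lab}_\mathcal{P}(\ell)$ then $\beta\notin\mathtt{lab}_\mathcal{P}(\ell)$ and every $\ell'>\ell$ labelled $\beta$ has $(c<0)\in\mathtt{g}_\mathcal{P}(\ell')$; if $\Psi\in\mathtt{lab}_\mathcal{P}(\ell)$ then some $\ell'>\ell$ labelled $\beta$ has $(c\ge0)\in\mathtt{g}_\mathcal{P}(\ell')$; (d) some component $P_{k'}$ has all locations consistent w.r.t. $\Psi$ and: if $P_k$ is the last component then $k'<k$ and $(P_{k'},\dots,P_k)$ is $\{\alpha,\beta,\Psi\}$-periodic; if $P_k$ is not last and ($P_k$ good/neutral and $\Psi\notin\mathtt{lab}_\mathcal{P}(\ell)$, or $P_k$ bad and $\Psi\in\mathtt{lab}_\mathcal{P}(\ell)$) then $k'<k$ and $(P_{k'},\dots,P_{k+1})$ is periodic; if $P_k$ is not last and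 ($P_k$ good/neutral and $\Psi\in\mathtt{lab}_\mathcal{P}(\ell)$, or $P_k$ bad and $\Psi\notin\mathtt{lab}_\mathcal{P}(\ell)$) then $k<k'$, $P_{k'}$ not last, and $(P_k,\dots,P_{k'+1})$ is periodic. $\mathcal{P}$ is consistent w.r.t. $\Psi$ if all its locations are. *)

From mathcomp Require Import all_boot all_order all_algebra.
Set Implicit Arguments. Unset Strict Implicit. Unset Printing Implicit Defensive.
Import GRing.Theory Num.Theory.

Inductive fltl (AP : Type) : Type :=
| FAtom of AP
| FAnd of fltl AP & fltl AP
| FNeg of fltl AP
| FNext of fltl AP
| FUntil of fltl AP & nat & nat & fltl AP.  (* FUntil a x y b = a U^{x/y} b *)

Arguments FAtom {AP}. Arguments FAnd {AP}. Arguments FNeg {AP}.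
Arguments FNext {AP}. Arguments FUntil {AP}.

Fixpoint wf_form AP (f : fltl AP) : Prop :=
  match f with
  | FAtom _ => True
  | FAnd a b => wf_form a /\ wf_form b
  | FNeg a => wf_form a
  | FNext a => wf_form a
  | FUntil a x y b => x <= y /\ 0 < y /\ wf_form a /\ wf_form b
  end.

Definition child AP (a f : fltl AP) : Prop :=
  match f with
  | FAtom _ => False
  | FAnd b c => a = b \/ a = c
  | FNeg b => a = b
  | FNext b => a = b
  | FUntil b _ _ c => a = b \/ a = c
  end.

Inductive subf AP : fltl AP -> fltl AP -> Prop :=
| subf_refl f : subf f f
| subf_step f g h : subf f g -> child g h -> subf f h.

Definition strict_sub AP (a f : fltl AP) : Prop :=
  exists g, child g f /\ subf a g.

Record kripke (AP : finType) := Kripke {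
  kS : finType;
  kI : kS;
  kE : rel kS;
  klab : kS -> {set AP} }.
Arguments kS {AP}. Arguments kI {AP}. Arguments kE {AP}. Arguments klab {AP}.

Section KripkeDefs.
Variables (AP : finType) (K : kripke AP).

Definition simple_loop (l : seq (kS K)) : Prop :=
  0 < size l /\ uniq l /\
  (forall i, i.+1 < size l -> kE K (nth (kI K) l i) (nth (kI K) l i.+1)) /\
  kE K (last (kI K) l) (head (kI K) l).

Definition flat : Prop :=
  forall l1 l2, simple_loop l1 -> simple_loop l2 ->
    head (kI K) l1 = head (kI K) l2 -> l1 = l2.

Fixpoint fsat (rho : nat -> kS K) (f : fltl AP) (i : nat) {struct f} : Prop :=
  match f with
  | FAtom p => p \in klab K (rho i)
  | FAnd a b => fsat rho a i /\ fsat rho b i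
  | FNeg a => ~ fsat rho a i
  | FNext a => fsat rho a i.+1
  | FUntil a x y b =>
      fsat rho b i \/
      exists k, i <= k /\ fsat rho b k.+1 /\
        exists c : nat -> bool,
          (forall j, i <= j <= k -> (c j <-> fsat rho a j)) /\
          x * (k - i + 1) <= y * (\sum_(i <= j < k.+1) c j)
  end.
End KripkeDefs.

(* guards: (c, false) stands for (c < 0), (c, true) stands for (c >= 0) *)
Definition guard_holds (C : finType) (g : C * bool) (th : C -> int) : Prop :=
  if g.2 then (0 <= th g.1)%R else (th g.1 < 0)%R.

Record csys (C : finType) := CSys {
  cs_Q : Type;
  cs_qI : cs_Q;
  cs_Delta : cs_Q -> (C -> int) -> {set (C * bool)} -> cs_Q -> Prop }.

Definition is_run (C : finType) (M : csys C) (q : nat -> cs_Q M) : Prop :=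
  q 0 = cs_qI M /\
  exists (th : nat -> C -> int) (us : nat -> C -> int) (Gs : nat -> {set (C * bool)}),
    th 0 = (fun _ => 0%R) /\
    forall i, @cs_Delta C M (q i) (us i) (Gs i) (q i.+1) /\
              th i.+1 = (fun c => th i c + us i c)%R /\
              (forall g, g \in Gs i -> guard_holds g (th i.+1)).

Inductive atype := TypL | TypR.

Record astate (AP : finType) (S : Type) (C : finType) := AState {
  a_st : S;
  a_lab : fltl AP -> bool;
  a_g : {set (C * bool)};
  a_u : C -> int;
  a_t : atype }.
Arguments AState {AP S C}. Arguments a_st {AP S C}. Arguments a_lab {AP S C}.
Arguments a_g {AP S C}. Arguments a_u {AP S C}. Arguments a_t {AP S C}.

Section APS.
Variables (AP C : finType) (K : kripke AP).
Notation ast := (astate AP (kS K) C).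

Definition dflt : ast := AState (kI K) (fun _ => false) set0 (fun _ => 0%R) TypR.

Definition isL (a : ast) : bool := if a_t a is TypL then true else false.
Definition isR (a : ast) : bool := if a_t a is TypR then true else false.

Definition aug_path (l : seq ast) : Prop :=
  forall i, i.+1 < size l -> kE K (a_st (nth dflt l i)) (a_st (nth dflt l i.+1)).

Definition is_row (l : seq ast) : Prop := 0 < size l /\ all isR l /\ aug_path l.

Definition is_loop (l : seq ast) : Prop :=
  0 < size l /\ all isL l /\ aug_path l /\
  kE K (a_st (last dflt l)) (a_st (head dflt l)) /\ uniq (map a_st l).

Variable P : seq (seq ast).

Definition compP k := nth [::] P k.
Definition lastc := (size P).-1.
Definition lenP := size (flatten P).
Definition at_loc l := nth dflt (flatten P) l.
Definition lab_P l (f : fltl AP) : bool := a_lab (at_loc l) f.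
Definition startP k := sumn (map size (take k P)).
Definition inloc k l := startP k <= l < startP k + size (compP k).

Definition is_aps (Phi : fltl AP) : Prop :=
  0 < size P /\
  (forall k, k < size P -> is_row (compP k) \/ is_loop (compP k)) /\
  is_loop (compP lastc) /\
  aug_path (flatten P) /\
  (forall l f, l < lenP -> lab_P l f -> subf f Phi \/ exists p, f = FAtom p).

Definition cs_edge l l' : Prop :=
  (l' = l.+1 /\ l.+1 < lenP) \/
  (l' < l /\ exists k, k < size P /\ is_loop (compP k) /\
                       startP k = l' /\ startP k + size (compP k) = l.+1).

Definition CS : csys C :=
  @CSys C nat 0 (fun l u G l' => cs_edge l l' /\ u = a_u (at_loc l) /\ G = a_g (at_loc l')).

Definition runs (sigma : nat -> nat) : Prop :=
  is_run (M := CS) sigma /\ forall l, l < lenP -> exists i, sigma i = l.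

Definition stP (sigma : nat -> nat) : nat -> kS K := fun i => a_st (at_loc (sigma i)).

Definition sat_P (sigma : nat -> nat) (f : fltl AP) (i : nat) : Prop :=
  fsat (stP sigma) f i.

Definition cnt_lab (a : fltl AP) (u : seq ast) := count (fun s => a_lab s a) u.
Definition good a x y (u : seq ast) := x * size u < y * cnt_lab a u.
Definition neutral a x y (u : seq ast) := x * size u = y * cnt_lab a u.
Definition bad a x y (u : seq ast) := y * cnt_lab a u < x * size u.

Definition slice a b := take (b.+1 - a) (drop a P).

Definition periodic (L : fltl AP -> Prop) (ps : seq (seq ast)) : Prop :=
  forall i j, i < size ps -> j < size ps ->
    size (nth [::] ps i) = size (nth [::] ps j) /\
    forall t, t < size (nth [::] ps i) -> forall f, L f ->
      a_lab (nth dflt (nth [::] ps i) t) f = a_lab (nth dflt (nth [::] ps j) t) f.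

Definition subs_ok (cons : fltl AP -> nat -> Prop) (Psi : fltl AP) : Prop :=
  forall a, strict_sub a Psi -> forall l', l' < lenP -> cons a l'.

Inductive lcons : fltl AP -> nat -> Prop :=
| lc_atom p k l : k < size P -> inloc k l -> subs_ok lcons (FAtom p) ->
    (lab_P l (FAtom p) <-> p \in klab K (a_st (at_loc l))) ->
    lcons (FAtom p) l
| lc_and a b k l : k < size P -> inloc k l -> subs_ok lcons (FAnd a b) ->
    (lab_P l (FAnd a b) <-> lab_P l a /\ lab_P l b) ->
    lcons (FAnd a b) l
| lc_neg a k l : k < size P -> inloc k l -> subs_ok lcons (FNeg a) ->
    (lab_P l (FNeg a) <-> ~~ lab_P l a) ->
    lcons (FNeg a) l
| lc_next a k l : k < size P -> inloc k l -> subs_ok lcons (FNext a) ->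
    (forall l', cs_edge l l' -> (lab_P l (FNext a) <-> lab_P l' a)) ->
    lcons (FNext a) l
| lc_until_a a x y b k l : k < size P -> inloc k l -> subs_ok lcons (FUntil a x y b) ->
    lab_P l (FUntil a x y b) -> lab_P l b ->
    lcons (FUntil a x y b) l
| lc_until_b a x y b k l : k < size P -> inloc k l -> subs_ok lcons (FUntil a x y b) ->
    lab_P l (FUntil a x y b) -> good a x y (compP lastc) ->
    (exists l', inloc lastc l' /\ lab_P l' b) ->
    lcons (FUntil a x y b) l
| lc_until_c a x y b k l : k < size P -> inloc k l -> subs_ok lcons (FUntil a x y b) ->
    a_t (at_loc l) = TypR ->
    (exists c : C,
      (forall l', l' < l -> a_u (at_loc l') c = 0%R) /\
      (forall l', l <= l' < lenP -> lab_P l' a -> a_u (at_loc l') c = (y%:Z - x%:Z)%R) /\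
      (forall l', l <= l' < lenP -> ~~ lab_P l' a -> a_u (at_loc l') c = (- x%:Z)%R) /\
      (~~ lab_P l (FUntil a x y b) ->
         ~~ lab_P l b /\
         forall l', l < l' < lenP -> lab_P l' b -> (c, false) \in a_g (at_loc l')) /\
      (lab_P l (FUntil a x y b) ->
         exists l', l < l' < lenP /\ lab_P l' b /\ (c, true) \in a_g (at_loc l'))) ->
    lcons (FUntil a x y b) l
| lc_until_d a x y b k l : k < size P -> inloc k l -> subs_ok lcons (FUntil a x y b) ->
    (exists k', k' < size P /\
      (forall l', inloc k' l' -> lcons (FUntil a x y b) l') /\
      (k = lastc -> k' < k /\
         periodic (fun f => f = a \/ f = b \/ f = FUntil a x y b) (slice k' k)) /\
      (k <> lastc ->
         ((good a x y (compP k) \/ neutral a x y (compP k)) /\ ~~ lab_P l (FUntil a x y b)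
          \/ bad a x y (compP k) /\ lab_P l (FUntil a x y b)) ->
         k' < k /\
         periodic (fun f => f = a \/ f = b \/ f = FUntil a x y b) (slice k' k.+1)) /\
      (k <> lastc ->
         ((good a x y (compP k) \/ neutral a x y (compP k)) /\ lab_P l (FUntil a x y b)
          \/ bad a x y (compP k) /\ ~~ lab_P l (FUntil a x y b)) ->
         k < k' /\ k' <> lastc /\
         periodic (fun f => f = a \/ f = b \/ f = FUntil a x y b) (slice k k'.+1))) ->
    lcons (FUntil a x y b) l.

Definition consistent (Psi : fltl AP) : Prop := forall l, l < lenP -> lcons Psi l.

Definition locs k : seq nat := iota (startP k) (size (compP k)).
End APS.

Definition uvw (u v : seq nat) (n : nat) (w : nat -> nat) : nat -> nat :=
  fun i => if i < size u then nth 0 u i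
           else if i < size u + n * size v then nth 0 v ((i - size u) %% size v)
           else w (i - size u - n * size v).

(* Consistent labels are correct: along a run sigma, a formula consistent with the schema
   holds at position i iff it labels the location sigma(i).  On the block v^n the truth values of phi and psi are therefore
   |v|-periodic, and what remains is a statement about the weighted until over two periodic
   boolean sequences.  If v is good (phi-frequency above x/y), truth of Phi propagates
   backwards by whole periods and, from any position at least x(|v|-1)|v| further on, back
   to any earlier one; if v is bad, truth propagates forwards and, once it switches on
   between two consecutive copies of v, it holds at every position at least
   (y-1)(|v|-1)|v| further on; if v is neutral it propagates both ways.  Hence all changes
   of truth value between consecutive copies of v occur within |v|y copies of the first
   one, and n1 is placed there. *)

From mathcomp Require Import all_boot all_order all_algebra.
From mathcomp Require Import zify.
From Stdlib Require Import Classical Wf_nat.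
Set Implicit Arguments. Unset Strict Implicit. Unset Printing Implicit Defensive.
Import GRing.Theory Num.Theory.

(** * Weighted until over boolean sequences *)

Definition count_between (A : nat -> bool) i k := \sum_(i <= j < k) (A j : nat).

Section CountBetween.
Variable A : nat -> bool.
Local Notation cnt := (count_between A).

Lemma count_between_geq i k : k <= i -> cnt i k = 0.
Proof. by move=> h; rewrite /count_between big_geq. Qed.

Lemma count_betweenSr i k : i <= k -> cnt i k.+1 = cnt i k + A k.
Proof. by move=> h; rewrite /count_between big_nat_recr. Qed.

Lemma count_between_cat i j k : i <= j -> j <= k -> cnt i k = cnt i j + cnt j k.
Proof. by move=> h1 h2; rewrite /count_between (@big_cat_nat _ _ _ j). Qed.

Lemma count_between_le i k : cnt i k <= k - i.
Proof.
rewrite /count_between -[k - i]muln1 -sum_nat_const_nat.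
by apply: leq_sum => j _; rewrite leq_b1.
Qed.

Lemma count_between_shift A' i i' d :
  (forall m, m < d -> A (i + m) = A' (i' + m)) ->
  cnt i (i + d) = count_between A' i' (i' + d).
Proof.
move=> H; rewrite /count_between -{1}[i]add0n -{1}[i']add0n !big_addn !addKn.
by apply: eq_big_nat => m /andP [_ hm]; rewrite addnC H // addnC.
Qed.

End CountBetween.

Definition until_witness (A B : nat -> bool) x y i k : bool :=
  [&& i <= k, B k.+1 & x * (k.+1 - i) <= y * count_between A i k.+1].

Definition until_at (A B : nat -> bool) x y i : Prop :=
  B i \/ exists k, until_witness A B x y i k.

Lemma witness_shift A B A' B' x y i i' k :
  (forall m, m <= k.+1 - i -> A (i + m) = A' (i' + m) /\ B (i + m) = B' (i' + m)) ->
  until_witness A B x y i k -> until_witness A' B' x y i' (i' + (k - i)).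
Proof.
move=> H /and3P [hik hB hk].
have eS : (i' + (k - i)).+1 = i' + (k.+1 - i) by rewrite -addnS subSn.
apply/and3P; rewrite eS; split; first exact: leq_addr.
  by have [_ <-] := H (k.+1 - i) (leqnn _); rewrite subnKC // ltnW.
rewrite addKn -(@count_between_shift A A' i) ?subnKC ?(leqW hik) //.
by move=> m hm; have [] := H m (ltnW hm).
Qed.

Lemma until_shift A B A' B' x y i i' :
  (forall m, A (i + m) = A' (i' + m) /\ B (i + m) = B' (i' + m)) ->
  until_at A B x y i -> until_at A' B' x y i'.
Proof.
move=> H [hB | [k hk]]; last by right; exists (i' + (k - i)); exact: witness_shift hk.
by left; have [_] := H 0; rewrite !addn0 => <-.
Qed.

Section Until.
Variables (A B : nat -> bool) (x y : nat).
Local Notation cnt := (count_between A).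
Local Notation witness := (until_witness A B x y).
Local Notation U := (until_at A B x y).

Lemma until_prepend i j : i <= j -> x * (j - i) <= y * cnt i j -> U j -> U i.
Proof.
move=> hij hx; case: (eqVneq i j) => [-> // | hne] [hB | [k /and3P [hjk hB hk]]]; right.
  exists j.-1; apply/and3P; rewrite prednK; last lia.
  by split=> //; lia.
exists k; apply/and3P; split=> //; first exact: leq_trans hjk.
rewrite (@count_between_cat _ i j) ?(leqW hjk) //.
have -> : k.+1 - i = (j - i) + (k.+1 - j) by lia.
by rewrite !mulnDr leq_add.
Qed.

Lemma witness_suffix i j k :
  i <= j <= k -> y * cnt i j <= x * (j - i) -> witness i k -> witness j k.
Proof.
move=> /andP [hij hjk] hy /and3P [_ hB hk]; apply/and3P; split=> //.
move: hk; rewrite (@count_between_cat _ i j) ?(leqW hjk) //.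
have -> : k.+1 - i = (j - i) + (k.+1 - j) by lia.
rewrite !mulnDr; lia.
Qed.

Lemma witness_drop_last i j k :
  i <= j < k -> B j.+1 -> y * cnt j.+1 k.+1 <= x * (k - j) ->
  witness i k -> witness i j.
Proof.
move=> /andP [hij hjk] hB hy /and3P [_ _ hk]; apply/and3P; split=> //.
move: hk; rewrite (@count_between_cat _ i j.+1); [|lia|lia].
have -> : k.+1 - i = (j.+1 - i) + (k - j) by lia.
rewrite !mulnDr; lia.
Qed.

End Until.

Definition periodic_on (A B : nat -> bool) p s E :=
  forall j, s <= j -> j + p <= E -> A j = A (j + p) /\ B j = B (j + p).

Section PeriodicUntil.
Variables (A B : nat -> bool) (x y p s E : nat).
Hypotheses (p_gt0 : 0 < p) (per : periodic_on A B p s E).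
Local Notation cnt := (count_between A).
Local Notation witness := (until_witness A B x y).
Local Notation U := (until_at A B x y).
Local Notation c := (count_between A s (s + p)).

Lemma periodic_onM j D :
  s <= j -> j + D * p <= E -> A j = A (j + D * p) /\ B j = B (j + D * p).
Proof.
move=> hs; elim: D => [|D IH] h; first by rewrite !addn0.
rewrite mulSnr addnA in h *.
have [-> ->] := IH ltac:(lia).
by apply: per; lia.
Qed.

Lemma count_period w : s <= w -> w + p <= E -> cnt w (w + p) = c.
Proof.
elim: w => [|w IH] hs hE; first by have -> : s = 0 by lia.
have [-> | hsw] := eqVneq s w.+1; first by [].
rewrite -IH; [|lia|lia].
have e1 : cnt w (w + p).+1 = cnt w (w + p) + A (w + p) by rewrite count_betweenSr ?leq_addr.
have e2 : cnt w (w + p).+1 = A w + cnt w.+1 (w.+1 + p).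
  rewrite (@count_between_cat A w w.+1) ?addSn; [|lia|lia].
  by rewrite count_betweenSr // count_between_geq.
have [hA _] := per (j := w) ltac:(lia) ltac:(lia).
lia.
Qed.

Lemma count_periods w D : s <= w -> w + D * p <= E -> cnt w (w + D * p) = D * c.
Proof.
move=> hs; elim: D => [|D IH] h; first by rewrite addn0 count_between_geq.
rewrite mulSnr addnA (@count_between_cat _ w (w + D * p)); [|lia|lia].
by rewrite IH ?count_period; lia.
Qed.

Lemma count_long_good i j : x * p < y * c -> s <= i -> i <= j <= E ->
  x * (p - 1) * p <= j - i -> x * (j - i) <= y * cnt i j.
Proof.
move=> hg hs /andP [hij hjE] hd.
have ha : j - i = (j - i) %/ p * p + (j - i) %% p := divn_eq _ _.
have hr : (j - i) %% p < p := ltn_pmod _ p_gt0.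
move: ((j - i) %/ p) ((j - i) %% p) ha hr => a r ha hr.
have hxa : x * (p - 1) < a.+1 by rewrite -(ltn_pmul2r p_gt0) mulSn; lia.
have hcnt : a * c <= cnt i j.
  by rewrite (@count_between_cat _ i (i + a * p) j) ?count_periods; lia.
have hxr : x * r <= x * (p - 1) by rewrite leq_mul2l; lia.
have hyc : a * (x * p).+1 <= a * (y * c) by rewrite leq_mul2l hg orbT.
have hyc' : y * (a * c) <= y * cnt i j by rewrite leq_mul2l hcnt orbT.
rewrite ha mulnDr mulnCA; rewrite mulnCA in hyc'; rewrite mulnS in hyc; lia.
Qed.

Lemma count_long_bad i j : y * c < x * p -> s <= i -> i <= j <= E ->
  (y - 1) * (p - 1) * p <= j - i -> y * cnt i j <= x * (j - i).
Proof.
move=> hb hs /andP [hij hjE] hd.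
have ha : j - i = (j - i) %/ p * p + (j - i) %% p := divn_eq _ _.
have hr : (j - i) %% p < p := ltn_pmod _ p_gt0.
move: ((j - i) %/ p) ((j - i) %% p) ha hr => a r ha hr.
have hya : (y - 1) * (p - 1) < a.+1 by rewrite -(ltn_pmul2r p_gt0) mulSn; lia.
have hx : 0 < x by move: hb; case: (x) => //; rewrite mul0n.
have hcnt : cnt i j <= a * c + r.
  rewrite (@count_between_cat _ i (i + a * p) j) ?count_periods; [|lia|lia|lia|lia].
  by have := count_between_le A (i + a * p) j; lia.
have hyr : (y - 1) * r <= (y - 1) * (p - 1) by rewrite leq_mul2l; lia.
have hxr : r <= x * r by rewrite leq_pmull.
have hxc : a * (y * c).+1 <= a * (x * p) by rewrite leq_mul2l hb orbT.
have hyc : y * cnt i j <= y * (a * c + r) by rewrite leq_mul2l hcnt orbT.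
have hy1 : y * r <= r + (y - 1) * r by rewrite -mulSn leq_mul2r; lia.
rewrite ha mulnDr mulnCA; rewrite mulnDr mulnCA in hyc; rewrite mulnS in hxc; lia.
Qed.

Lemma until_back_good i D : x * p <= y * c -> s <= i -> i + D * p <= E ->
  U (i + D * p) -> U i.
Proof.
move=> hg hs hE; apply: until_prepend; first exact: leq_addr.
by rewrite addKn count_periods // mulnCA [y * _]mulnCA leq_mul2l hg orbT.
Qed.

(* Dropping a final bad period from a witness leaves a witness, so a shortest witness ends
   within one period or beyond the window. *)
Lemma until_first_witness_bad i : y * c <= x * p -> s <= i ->
  (exists k, witness i k) -> exists2 k, witness i k & (k < i + p) || (E <= k).
Proof.
move=> hb hs hex; have [k hk hmin] := ex_minnP hex.
exists k => //; apply/negPn/negP; rewrite negb_or -leqNgt -ltnNge => /andP [hpk hkE].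
have e : (k - p).+1 = k.+1 - p by lia.
have hBk : B k.+1 by case/and3P: hk.
suff /hmin : witness i (k - p) by lia.
apply: witness_drop_last hk; first lia.
  by rewrite e; have [_ ->] := per (j := k.+1 - p) ltac:(lia) ltac:(lia); rewrite subnK //; lia.
have -> : k.+1 = k.+1 - p + p by lia.
by rewrite e count_period; [have -> : k - (k - p) = p by lia | lia | lia].
Qed.

Lemma until_fwd_bad i D : y * c <= x * p -> s <= i -> i + D * p + p <= E ->
  U i -> U (i + D * p).
Proof.
move=> hb hs hE [hB | /(until_first_witness_bad hb hs) [k hk /orP [hkp | hEk]]].
- by left; have [_ <-] := periodic_onM hs (leq_trans (leq_addr _ _) hE).
- right; exists (i + D * p + (k - i)); apply: witness_shift hk => m hm.
  by rewrite addnAC; apply: periodic_onM; lia.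
right; exists k; apply: witness_suffix hk; first lia.
rewrite addKn count_periods; [|lia|lia].
by rewrite mulnCA [x * _]mulnCA leq_mul2l hb orbT.
Qed.

Lemma until_far_good i j : x * p < y * c -> s <= i -> i <= j <= E ->
  x * (p - 1) * p <= j - i -> U j -> U i.
Proof.
move=> hg hs hj hd; apply: until_prepend; first by case/andP: hj.
exact: count_long_good.
Qed.

Lemma until_far_bad i j : y * c < x * p -> s <= i -> i + p + p <= E ->
  i + p <= j <= E -> (y - 1) * (p - 1) * p <= j - (i + p) ->
  ~ U i -> U (i + p) -> U j.
Proof.
move=> hb hs hE hj hd hnU.
have shift_back : forall m, m <= p -> A (i + p + m) = A (i + m) /\ B (i + p + m) = B (i + m).
  by move=> m hm; rewrite addnAC; have [-> ->] := per (j := i + m) ltac:(lia) ltac:(lia).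
have hs' : s <= i + p := leq_trans hs (leq_addr _ _).
case=> [hB | /(until_first_witness_bad (ltnW hb) hs') [k hk /orP [hkp | hEk]]].
- by case: hnU; left; have [_ ->] := per hs ltac:(lia).
- case: hnU; right; exists (i + (k - (i + p))).
  by apply: witness_shift hk => m hm; apply: shift_back; lia.
right; exists k; apply: witness_suffix hk; first lia.
by apply: (count_long_bad hb); lia.
Qed.

End PeriodicUntil.

Section PeriodChanges.
Variables (A B : nat -> bool) (x y p s n : nat).
Hypotheses (p_gt0 : 0 < p) (y_gt0 : 0 < y).
Hypothesis per : periodic_on A B p s (s + n * p - 1).
Local Notation U := (until_at A B x y).
Local Notation c := (count_between A s (s + p)).
Local Notation E := (s + n * p - 1).

(* Copy [r.+2] must still lie in the block: the propagation lemmas look one period ahead. *)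
Definition period_change r :=
  r.+3 <= n /\ exists2 o, o < p & ~ (U (s + r * p + o) <-> U (s + r.+1 * p + o)).

Lemma until_change_bad i : y * c <= x * p -> s <= i -> i + p + p <= E ->
  ~ (U i <-> U (i + p)) -> ~ U i /\ U (i + p).
Proof.
move=> hb hs hE hne.
have fw := until_fwd_bad p_gt0 per (D := 1) hb hs; rewrite mul1n in fw.
split=> [hU | ]; first by apply: hne; split=> // _; exact: fw.
by apply: NNPP => hnU; apply: hne; split=> h; [case: hnU; exact: fw | case: hnU].
Qed.

Lemma until_change_good i : x * p <= y * c -> s <= i -> i + p <= E ->
  ~ (U i <-> U (i + p)) -> U i /\ ~ U (i + p).
Proof.
move=> hg hs hE hne.
have bw := until_back_good p_gt0 per (D := 1) hg hs; rewrite mul1n in bw.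
split=> [ | hU]; last by apply: hne; split=> // _; exact: bw.
by apply: NNPP => hnU; apply: hne; split=> h; [case: hnU | case: hnU; exact: bw].
Qed.

Lemma period_gap r0 r o o' : o' < p -> r0.+1 + p * y <= r ->
  (y - 1) * (p - 1) * p <= (s + r * p + o) - (s + r0 * p + o' + p).
Proof.
move=> ho' hr.
have h1 : (r0.+1 + p * y) * p <= r * p by rewrite leq_mul2r hr orbT.
have h2 : ((y - 1) * (p - 1)).+1 <= p * y.
  apply: (@leq_ltn_trans ((y - 1) * p)); first by rewrite leq_mul2l; lia.
  by rewrite mulnC ltn_mul2l p_gt0; lia.
have h3 : ((y - 1) * (p - 1)).+1 * p <= p * y * p by rewrite leq_mul2r h2 orbT.
rewrite mulSnr in h3; rewrite mulnDl mulSn in h1; lia.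
Qed.

Lemma period_end_bound r o : r.+3 <= n -> o < p -> s + r * p + o + p + p <= E.
Proof.
move=> hr ho; have : r.+3 * p <= n * p by rewrite leq_mul2r hr orbT.
rewrite !mulSn; lia.
Qed.

(* Truth of the until moves forwards by a period when the loop is bad and backwards when it
   is good, so a second change far after a first one contradicts [until_far_bad], resp.
   [until_far_good]. *)
Lemma period_changes_close r0 r :
  period_change r0 -> period_change r -> r0.+1 + p * y <= r -> False.
Proof.
move=> [hr0 [o' ho' hne0]] [hr [o ho hne]] hrr.
have eS : forall r1 o1, s + r1.+1 * p + o1 = s + r1 * p + o1 + p.
  by move=> r1 o1; rewrite mulSnr; lia.
rewrite !eS in hne0 hne.
have hE0 := period_end_bound hr0 ho'; have hE := period_end_bound hr ho.
have hgap := period_gap o ho' hrr.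
have hij : s + r0 * p + o' + p <= s + r * p + o.
  have hpy : 0 < p * y by rewrite muln_gt0 p_gt0.
  have : r0.+2 * p <= r * p by rewrite leq_mul2r; apply/orP; right; lia.
  rewrite !mulSn; lia.
have hs0 : s <= s + r0 * p + o' by rewrite -addnA leq_addr.
have hs1 : s <= s + r * p + o by rewrite -addnA leq_addr.
have hcp : c <= p by have := count_between_le A s (s + p); rewrite addKn.
case: (ltngtP (y * c) (x * p)) => hyc.
- have [hn0 hu0] := until_change_bad (ltnW hyc) hs0 hE0 hne0.
  have [hn _] := until_change_bad (ltnW hyc) hs1 hE hne.
  by apply: hn; apply: (until_far_bad p_gt0 per hyc _ hE0 _ hgap hn0 hu0); lia.
- have [hu0 hn0] := until_change_good (ltnW hyc) hs0 (leq_trans (leq_addr _ _) hE0) hne0.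
  have [hu _] := until_change_good (ltnW hyc) hs1 (leq_trans (leq_addr _ _) hE) hne.
  apply: hn0; apply: (until_far_good p_gt0 per hyc _ _ _ hu); [lia | lia |].
  have hxy : x <= y - 1.
    have : x * p < y * p by apply: (leq_trans hyc); rewrite leq_mul2l hcp orbT.
    by rewrite ltn_mul2r; lia.
  by apply: leq_trans hgap; rewrite !leq_mul2r hxy !orbT.
- have e1 : s + r0 * p + o' + 1 * p = s + r0 * p + o' + p by rewrite mul1n.
  apply: hne0; rewrite -e1; split.
    by apply: (until_fwd_bad p_gt0 per (eq_leq hyc) hs0); rewrite mul1n.
  apply: (until_back_good p_gt0 per (eq_leq (esym hyc)) hs0).
  by rewrite mul1n (leq_trans (leq_addr _ _) hE0).
Qed.

Lemma period_changes_window : exists r0, forall r, period_change r -> r0 <= r <= r0 + p * y.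
Proof.
case: (classic (exists r, period_change r)) => [hex | hnone]; last first.
  by exists 0 => r hr; case: hnone; exists r.
have [r0 [[hr0 hmin] _]] :=
  dec_inh_nat_subset_has_unique_least_element period_change (fun r => classic _) hex.
exists r0 => r hr; apply/andP; split; first exact/leP/hmin.
by rewrite leqNgt; apply/negP => hlt; apply: (period_changes_close hr0 hr); lia.
Qed.

Lemma until_period_step i : s <= i -> ((i - s) %/ p).+3 <= n ->
  ~ period_change ((i - s) %/ p) -> (U i <-> U (i + p)).
Proof.
move=> hs hq hnc; apply: NNPP => hne; apply: hnc; split=> //.
exists ((i - s) %% p); first exact: ltn_pmod.
have ei : s + (i - s) %/ p * p + (i - s) %% p = i by rewrite -addnA -divn_eq; lia.
have eiS : s + ((i - s) %/ p).+1 * p + (i - s) %% p = i + p by rewrite mulSnr -ei; lia.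
by rewrite ei eiS.
Qed.

Lemma until_periods_stable : p * y + 2 <= n ->
  exists n1 n2, n = n1 + p * y + n2 /\
    forall i, (s <= i < s + (n1 - 1) * p \/
               s + (n1 + p * y) * p <= i < s + (n1 + p * y + n2 - 2) * p) ->
      (U i <-> U (i + p)).
Proof.
move=> hn; have [r0 hr0] := period_changes_window.
pose n1 := minn r0.+1 (n - p * y).
have hpy : 0 < p * y by rewrite muln_gt0 p_gt0.
exists n1, (n - p * y - n1); split; first lia.
have -> : n1 + p * y + (n - p * y - n1) - 2 = n - 2 by lia.
move=> i hi; have hs : s <= i by case: hi => /andP [h1 h2]; lia.
have hq : ((i - s) %/ p).+3 <= n /\
    ((i - s) %/ p < n1 - 1 \/ n1 + p * y <= (i - s) %/ p).
  case: hi => /andP [h1 h2].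
    have : (i - s) %/ p < n1 - 1 by rewrite ltn_divLR //; lia.
    lia.
  have : (i - s) %/ p < n - 2 by rewrite ltn_divLR //; lia.
  have : n1 + p * y <= (i - s) %/ p by rewrite leq_divRL //; lia.
  lia.
by apply: (until_period_step hs (proj1 hq)) => /hr0; lia.
Qed.

End PeriodChanges.

Lemma fsat_until_at (AP : finType) (K : kripke AP) (rho : nat -> kS K) (A B : nat -> bool)
    a x y b i :
  (forall j, fsat rho a j <-> A j) -> (forall j, fsat rho b j <-> B j) ->
  fsat rho (FUntil a x y b) i <-> until_at A B x y i.
Proof.
move=> Ha Hb /=; split.
  case=> [h | [k [hik [hb [c [hc hx]]]]]]; first by left; apply/Hb.
  right; exists k; apply/and3P; split=> //; first exact/Hb.
  have -> : k.+1 - i = k - i + 1 by lia.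
  apply: leq_trans hx _; rewrite leq_mul2l; apply/orP; right.
  rewrite /count_between; apply: eq_leq; apply: eq_big_nat => j hj; congr nat_of_bool.
  by apply/idP/idP => h; [apply/Ha/(hc j) | apply/(hc j)/Ha] => //; lia.
case=> [h | [k /and3P [hik hb hx]]]; first by left; apply/Hb.
right; exists k; split=> //; split; first exact/Hb.
exists A; split; first by move=> j _; rewrite Ha.
by rewrite addn1 -subSn.
Qed.

(** * Path schemas and their runs *)

Section Layout.
Variables (AP C : finType) (K : kripke AP) (P : seq (seq (astate AP (kS K) C))).

Lemma startPS k : k < size P -> startP P k.+1 = startP P k + size (compP P k).
Proof. by move=> h; rewrite /startP (take_nth [::] h) map_rcons sumn_rcons. Qed.

Lemma startP_oversize k : size P <= k -> startP P k = lenP P.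
Proof. by move=> h; rewrite /startP take_oversize // /lenP size_flatten. Qed.

Lemma leq_startP k k' : k <= k' -> startP P k <= startP P k'.
Proof.
by move=> h; rewrite /startP -(subnKC h) takeD map_cat sumn_cat leq_addr.
Qed.

Lemma startP_ltn_inv k k' : startP P k < startP P k' -> k < k'.
Proof. by move=> h; rewrite ltnNge; apply/negP => /leq_startP; rewrite leqNgt h. Qed.

Lemma startP_leq_lenP k : startP P k <= lenP P.
Proof.
case: (leqP (size P) k) => h; first by rewrite startP_oversize.
by rewrite -(startP_oversize (leqnn _)) leq_startP // ltnW.
Qed.

Lemma inloc_inj k k' l : k < size P -> k' < size P -> inloc P k l -> inloc P k' l -> k = k'.
Proof.
move=> hk hk' /andP [h1 h2] /andP [h3 h4].
case: (ltngtP k k') => // hlt.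
  by have := leq_startP hlt; rewrite startPS //; lia.
by have := leq_startP hlt; rewrite startPS //; lia.
Qed.

Lemma at_loc_nth k r : k < size P -> r < size (compP P k) ->
  at_loc P (startP P k + r) = nth (dflt C K) (compP P k) r.
Proof.
rewrite /at_loc /compP /startP; elim: P k => [|c Q IH] [|k] //= hk hr.
  by rewrite add0n nth_cat hr.
by rewrite -addnA nth_cat ltnNge leq_addr /= addKn IH.
Qed.

Lemma size_slice k1 k2 : k2 < size P -> size (slice P k1 k2) = k2.+1 - k1.
Proof. by move=> h; rewrite /slice size_take size_drop; case: ltnP => //; lia. Qed.

Lemma nth_slice k1 k2 i : k2 < size P -> i < k2.+1 - k1 ->
  nth [::] (slice P k1 k2) i = compP P (k1 + i).
Proof. by move=> h hi; rewrite /slice nth_take // nth_drop. Qed.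

Lemma periodic_slice_size L k1 k2 c :
  periodic L (slice P k1 k2) -> k1 <= c <= k2 -> k2 < size P ->
  size (compP P c) = size (compP P k1).
Proof.
move=> HP /andP [h1 h2] hk2.
have [] := HP (c - k1) 0 ltac:(rewrite size_slice; lia) ltac:(rewrite size_slice; lia).
by rewrite !nth_slice ?addn0 ?subnKC //; lia.
Qed.

Lemma periodic_slice_lab L k1 k2 c r f :
  periodic L (slice P k1 k2) -> k1 <= c <= k2 -> k2 < size P ->
  r < size (compP P k1) -> L f ->
  lab_P P (startP P c + r) f = lab_P P (startP P k1 + r) f.
Proof.
move=> HP hc hk2 hr hL; have e := periodic_slice_size HP hc hk2.
move: hc => /andP [h1 h2].
have [_] := HP (c - k1) 0 ltac:(rewrite size_slice; lia) ltac:(rewrite size_slice; lia).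
rewrite !nth_slice ?addn0 ?subnKC // => [/(_ r) hlab||]; try lia.
by rewrite /lab_P !at_loc_nth ?e ?hlab //; lia.
Qed.

Lemma periodic_slice1 L k : k < size P -> periodic L (slice P k k).
Proof.
move=> hk i j; rewrite size_slice // subSnn => hi hj.
by have [-> ->] : i = 0 /\ j = 0 by lia.
Qed.

Lemma cnt_lab_nth a (u : seq (astate AP (kS K) C)) :
  cnt_lab a u = \sum_(0 <= m < size u) (a_lab (nth (dflt C K) u m) a : nat).
Proof. by rewrite /cnt_lab -sumn_count sumnE big_map (big_nth (dflt C K)). Qed.

Lemma count_between_component (A : nat -> bool) a k w : k < size P ->
  (forall m, m < size (compP P k) -> A (w + m) = lab_P P (startP P k + m) a) ->
  count_between A w (w + size (compP P k)) = cnt_lab a (compP P k).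
Proof.
move=> hk H; rewrite cnt_lab_nth /count_between -{1}[w]add0n big_addn addKn.
apply: eq_big_nat => m hm; rewrite addnC H; last lia.
by rewrite /lab_P at_loc_nth //; lia.
Qed.

Lemma periodic_slice_cnt_lab L k1 k2 c a :
  periodic L (slice P k1 k2) -> k1 <= c <= k2 -> k2 < size P -> L a ->
  cnt_lab a (compP P c) = cnt_lab a (compP P k1).
Proof.
move=> HP hc hk2 hL; have hsz := periodic_slice_size HP hc hk2.
rewrite !cnt_lab_nth hsz; apply: eq_big_nat => m /andP [_ hm].
have := periodic_slice_lab HP hc hk2 hm hL.
have hmc : m < size (compP P c) by rewrite hsz.
by case/andP: hc => h1 h2; rewrite /lab_P !at_loc_nth // => [-> | |]; lia.
Qed.

End Layout.

Section Runs.
Variables (AP C : finType) (K : kripke AP) (P : seq (seq (astate AP (kS K) C))).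
Variable sigma : nat -> nat.
Hypothesis run : runs P sigma.

Lemma run_edge i : cs_edge P (sigma i) (sigma i.+1).
Proof. by case: run => [[_ [th [us [Gs [_ H]]]]] _]; have [[]] := H i. Qed.

Lemma run_visits l : l < lenP P -> exists i, sigma i = l.
Proof. by case: run => _; apply. Qed.

Lemma run_counters : exists th : nat -> C -> int, th 0 = (fun _ => 0%R) /\
  forall i, th i.+1 = (fun c => th i c + a_u (at_loc P (sigma i)) c)%R /\
    forall g, g \in a_g (at_loc P (sigma i.+1)) -> guard_holds g (th i.+1).
Proof.
case: run => [[_ [th [us [Gs [h0 H]]]]] _]; exists th; split=> // i.
have [[_ [eu eG]] [e g]] := H i; split; first by rewrite e eu.
by move=> gg; rewrite -eG; apply: g.
Qed.

Lemma run_lt : 0 < lenP P -> forall i, sigma i < lenP P.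
Proof.
move=> hl; elim=> [|i IH]; first by case: run => [[->]].
by case: (run_edge i) => [[-> h] | [h _]] //; lia.
Qed.

Lemma run_leq_add i m : sigma (i + m) <= sigma i + m.
Proof.
elim: m => [|m IH]; first by rewrite !addn0.
by rewrite addnS; case: (run_edge (i + m)) => [[-> _] | [h _]]; lia.
Qed.

Lemma run_stays_after c j j' : startP P c <= sigma j -> j <= j' -> startP P c <= sigma j'.
Proof.
move=> hc /subnKC <-; elim: (j' - j) => [|m IH]; first by rewrite addn0.
rewrite addnS; case: (run_edge (j + m)) => [[-> _] | [hlt [k [hk [_ [<- e2]]]]]]; first lia.
case: (leqP c k) => hck; first exact: leq_startP.
by have := leq_startP P hck; rewrite startPS //; lia.
Qed.

Lemma run_in_block k1 k2 p c0 t i0 :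
  k2 < size P -> (forall c, k1 <= c <= k2 -> size (compP P c) = p) ->
  k1 <= c0 <= k2 -> t < p -> sigma i0 = startP P c0 + t ->
  forall m, sigma (i0 + m) < startP P k2.+1 ->
  exists2 c, k1 <= c <= k2 & sigma (i0 + m) = startP P c + (t + m) %% p.
Proof.
move=> hk2 hsz hc0 ht hs0; elim=> [|m IH].
  by move=> _; exists c0; rewrite ?addn0 ?modn_small.
rewrite addnS => hb.
have hb' : sigma (i0 + m) < startP P k2.+1.
  case: (run_edge (i0 + m)) => [[e _] | [hlt [k [hk [_ [e1 e2]]]]]]; first lia.
  have hkk : k < k2.+1 by apply: (@startP_ltn_inv _ _ _ P); rewrite e1.
  by have := leq_startP P hkk; rewrite startPS //; lia.
have [c hc e] := IH hb'.
have hr : (t + m) %% p < p by rewrite ltn_pmod //; lia.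
have hmod : (t + m.+1) %% p = ((t + m) %% p).+1 %% p.
  by rewrite addnS -[in RHS]addn1 modnDml addn1.
have hcS : startP P c.+1 = startP P c + p by rewrite startPS ?hsz //; lia.
case: (run_edge (i0 + m)) => [[eS _] | [hlt [k [hk [hloop [e1 e2]]]]]].
  rewrite eS e hmod; case: (ltnP ((t + m) %% p).+1 p) => h.
    by exists c; rewrite ?(modn_small h) //; lia.
  have hp : ((t + m) %% p).+1 = p by lia.
  exists c.+1; rewrite ?hp ?modnn ?hcS; last lia.
  have : startP P c.+1 < startP P k2.+1 by rewrite hcS; lia.
  by move/(@startP_ltn_inv _ _ _ P); lia.
have hkc : k = c.
  apply: (inloc_inj (l := sigma (i0 + m)) hk); first lia.
    by rewrite /inloc; lia.
  by rewrite /inloc (hsz c hc); lia.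
subst k; rewrite hsz // in e2; have hp : ((t + m) %% p).+1 = p by lia.
by exists c => //; rewrite hmod hp modnn addn0 -e1.
Qed.

End Runs.

Definition run_lab (AP C : finType) (K : kripke AP) (P : seq (seq (astate AP (kS K) C)))
  (sigma : nat -> nat) f : nat -> bool := fun j => lab_P P (sigma j) f.

Section RunBlocks.
Variables (AP C : finType) (K : kripke AP) (P : seq (seq (astate AP (kS K) C))).
Variable sigma : nat -> nat.
Hypothesis run : runs P sigma.
Local Notation lab := (run_lab P sigma).

Lemma run_below c j j' : sigma j' < startP P c -> j <= j' -> sigma j < startP P c.
Proof. by rewrite !ltnNge => h hj; apply: contra h => /(run_stays_after run); apply. Qed.

Section PeriodicBlock.
Variables (L : fltl AP -> Prop) (k1 kt t i1 : nat).
Hypotheses (HP : periodic L (slice P k1 kt)) (hkt : kt < size P) (hk1 : k1 <= kt).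
Hypotheses (ht : t < size (compP P k1)) (hs1 : sigma i1 = startP P k1 + t).
Local Notation p := (size (compP P k1)).

Lemma run_block_position m : sigma (i1 + m) < startP P kt.+1 ->
  exists2 c, k1 <= c <= kt & sigma (i1 + m) = startP P c + (t + m) %% p.
Proof.
apply: (run_in_block run hkt _ _ ht hs1); last by rewrite leqnn.
by move=> c hc; apply: periodic_slice_size HP hc hkt.
Qed.

Lemma run_lab_block f m : L f -> sigma (i1 + m) < startP P kt.+1 ->
  lab f (i1 + m) = lab_P P (startP P k1 + (t + m) %% p) f.
Proof.
move=> hf /run_block_position [c hc e].
by rewrite /run_lab e (periodic_slice_lab HP hc hkt _ hf) // ltn_pmod //; lia.
Qed.

Lemma run_block_offset m c t' : k1 <= c <= kt -> t' < p ->
  sigma (i1 + m) = startP P c + t' -> sigma (i1 + m) < startP P kt.+1 ->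
  (t + m) %% p = t'.
Proof.
move=> hc ht' e /run_block_position [c' hc' e'].
have hsz := periodic_slice_size HP _ hkt.
suff ec : c' = c by subst c'; lia.
have hr : (t + m) %% p < p by rewrite ltn_pmod //; lia.
apply: (inloc_inj (l := sigma (i1 + m)) (_ : c' < size P) (_ : c < size P)); try lia.
  by rewrite /inloc e' hsz //; lia.
by rewrite /inloc e hsz //; lia.
Qed.

End PeriodicBlock.

Lemma run_lab_shift_last L k1 kt t i1 i2 f :
  periodic L (slice P k1 kt) -> kt < size P -> k1 <= kt ->
  (forall j, sigma j < startP P kt.+1) ->
  t < size (compP P k1) -> sigma i1 = startP P k1 + t -> sigma i2 = startP P kt + t ->
  i1 <= i2 -> L f -> forall m, lab f (i1 + m) = lab f (i2 + m).
Proof.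
move=> HP hkt hk1 hall ht hs1 hs2 hi hf m.
have e : i2 = i1 + (i2 - i1) by rewrite subnKC.
have off : (t + (i2 - i1)) %% size (compP P k1) = t.
  apply: (run_block_offset HP hkt hk1 ht hs1 (c := kt) _ ht _ (hall _)) => //.
    by rewrite hk1 leqnn.
  by rewrite -e.
rewrite e -addnA !(run_lab_block HP hkt hk1 ht hs1) //.
by rewrite addnA -[in RHS]modnDml off.
Qed.

Section RepeatVisit.
Variables (L : fltl AP -> Prop) (k1 k2 t i1 i2 : nat).
Hypotheses (HP : periodic L (slice P k1 k2.+1)) (hk2 : k2.+1 < size P) (hk12 : k1 < k2).
Hypotheses (ht : t < size (compP P k1)) (hs1 : sigma i1 = startP P k1 + t).
Hypotheses (hs2 : sigma i2 = startP P k2 + t) (hi : i1 < i2).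
Local Notation p := (size (compP P k1)).

Lemma repeat_visit_bound m : m <= i2 - i1 + p -> sigma (i1 + m) < startP P k2.+2.
Proof.
have hsz c : k1 <= c <= k2.+1 -> size (compP P c) = p.
  by move=> hc; apply: periodic_slice_size HP hc hk2.
have eS1 : startP P k2.+1 = startP P k2 + p by rewrite startPS ?hsz //; lia.
have eS2 : startP P k2.+2 = startP P k2 + p + p by rewrite startPS // eS1 hsz //; lia.
move=> hm; case: (leqP (i1 + m) i2) => h.
  by apply: leq_trans (leq_startP P (leqnSn _)); apply: (run_below _ h); lia.
by have := run_leq_add run i2 (i1 + m - i2); rewrite subnKC; lia.
Qed.

Lemma repeat_visit_lab f m : L f -> m <= i2 - i1 + p ->
  lab f (i1 + m) = lab_P P (startP P k1 + (t + m) %% p) f.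
Proof.
move=> hf hm; apply: (run_lab_block HP hk2 _ ht hs1 hf); first lia.
exact: repeat_visit_bound.
Qed.

Lemma repeat_visit_distance : exists2 D, i2 = i1 + D * p & 0 < D.
Proof.
have hb2 : sigma i2 < startP P k2.+2.
  by have := @repeat_visit_bound (i2 - i1); rewrite subnKC ?leq_addr //; [apply | lia].
have off : (t + (i2 - i1)) %% p = t.
  by apply: (run_block_offset HP hk2 _ ht hs1 (c := k2)); rewrite ?subnKC ?hb2; lia.
have hmod : (i2 - i1) %% p = 0.
  have : t + (i2 - i1) = t + 0 %[mod p] by rewrite addn0 off modn_small.
  by move/eqP; rewrite eqn_modDl mod0n => /eqP.
exists ((i2 - i1) %/ p); first by have := divn_eq (i2 - i1) p; rewrite hmod addn0; lia.
by rewrite divn_gt0; [rewrite dvdn_leq ?subn_gt0 // /dvdn hmod | lia].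
Qed.

Lemma run_repeat_visit a b : L a -> L b ->
  exists2 D, i2 = i1 + D * p &
    periodic_on (lab a) (lab b) p i1 (i2 + p) /\
    count_between (lab a) i1 (i1 + p) = cnt_lab a (compP P k1).
Proof.
move=> La Lb; have [D eD hD] := repeat_visit_distance; exists D => //.
have per : periodic_on (lab a) (lab b) p i1 (i2 + p).
  move=> j hj hjp; have e1 : j = i1 + (j - i1) by lia.
  have e2 : j + p = i1 + (j - i1 + p) by lia.
  by rewrite e2 {1 3}e1 !repeat_visit_lab // ?addnA ?modnDr; lia.
split=> //; have hDp : p <= D * p by rewrite leq_pmull.
have hw : i1 <= i2 - t by lia.
rewrite -(count_period _ per hw); [|lia|lia].
apply: count_between_component => [|m hm]; first lia.
rewrite (_ : i2 - t + m = i1 + (i2 - t + m - i1)); last lia.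
rewrite repeat_visit_lab //; last lia.
by rewrite (_ : t + _ = D * p + m) ?modnMDl ?modn_small //; lia.
Qed.

Lemma until_repeat_visit_back a b x y : L a -> L b ->
  x * p <= y * cnt_lab a (compP P k1) ->
  until_at (lab a) (lab b) x y i2 -> until_at (lab a) (lab b) x y i1.
Proof.
move=> La Lb hg; have [D eD [per hc]] := run_repeat_visit La Lb.
rewrite eD; apply: (until_back_good _ per); rewrite ?hc //; lia.
Qed.

Lemma until_repeat_visit_fwd a b x y : L a -> L b ->
  y * cnt_lab a (compP P k1) <= x * p ->
  until_at (lab a) (lab b) x y i1 -> until_at (lab a) (lab b) x y i2.
Proof.
move=> La Lb hb; have [D eD [per hc]] := run_repeat_visit La Lb.
rewrite eD; apply: (until_fwd_bad _ per); rewrite ?hc //; lia.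
Qed.

End RepeatVisit.

End RunBlocks.

Section RowsAndLoops.
Variables (AP C : finType) (K : kripke AP) (P : seq (seq (astate AP (kS K) C))).
Hypothesis comps : forall k, k < size P -> is_row (compP P k) \/ is_loop (compP P k).

Lemma comp_gt0 k : k < size P -> 0 < size (compP P k).
Proof. by move/comps => [[]|[]]. Qed.

Lemma lenP_gt0 : 0 < size P -> 0 < lenP P.
Proof.
move=> hP; apply: leq_trans (comp_gt0 hP) _.
by have := startP_leq_lenP P 1; rewrite startPS // /startP take0.
Qed.

Lemma loop_typeL k l : k < size P -> is_loop (compP P k) -> inloc P k l ->
  a_t (at_loc P l) = TypL.
Proof.
move=> hk [_ [/all_nthP hall _]] /andP [h1 h2].
have := hall (dflt C K) (l - startP P k) ltac:(lia).
by rewrite -at_loc_nth ?subnKC //; [rewrite /isL; case: a_t | lia].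
Qed.

Lemma row_notin_loop k l : k < size P -> is_loop (compP P k) ->
  a_t (at_loc P l) = TypR -> ~ inloc P k l.
Proof. by move=> hk hl hR /(loop_typeL hk hl); rewrite hR. Qed.

Variable sigma : nat -> nat.
Hypothesis run : runs P sigma.

Lemma run_above_row l j j' : a_t (at_loc P l) = TypR -> l < sigma j -> j <= j' ->
  l < sigma j'.
Proof.
move=> hR hl /subnKC <-; elim: (j' - j) => [|m IH]; first by rewrite addn0.
rewrite addnS; case: (run_edge run (j + m)) => [[-> _] | [hlt [k [hk [hloop [e1 e2]]]]]].
  exact: ltnW.
rewrite ltnNge; apply/negP => hle.
by apply: (row_notin_loop hk hloop hR); rewrite /inloc; lia.
Qed.

Lemma run_row_next j : a_t (at_loc P (sigma j)) = TypR -> sigma j.+1 = (sigma j).+1.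
Proof.
move=> hR; case: (run_edge run j) => [[-> _] // | [hlt [k [hk [hloop [e1 e2]]]]]].
by case: (row_notin_loop hk hloop hR); rewrite /inloc; lia.
Qed.

Lemma run_after_row i j : a_t (at_loc P (sigma i)) = TypR -> i < j -> sigma i < sigma j.
Proof.
move=> hR hij; apply: (run_above_row hR (j := i.+1)) => //.
by rewrite run_row_next.
Qed.

Lemma run_before_row i j : a_t (at_loc P (sigma i)) = TypR -> j < i -> sigma j < sigma i.
Proof.
move=> hR hji; rewrite ltnNge; apply/negP; rewrite leq_eqVlt => /orP [/eqP e | hlt].
  by rewrite e in hR; have := run_after_row hR hji; rewrite e ltnn.
by have := run_above_row hR hlt (ltnW hji); rewrite ltnn.
Qed.

End RowsAndLoops.

(** * Consistent labels are correct *)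

Section UntilClauses.
Variables (AP C : finType) (K : kripke AP) (P : seq (seq (astate AP (kS K) C))).
Hypothesis comps : forall k, k < size P -> is_row (compP P k) \/ is_loop (compP P k).
Hypothesis P_gt0 : 0 < size P.
Variable sigma : nat -> nat.
Hypothesis run : runs P sigma.
Variables (a b : fltl AP) (x y : nat).
Local Notation U := (until_at (run_lab P sigma a) (run_lab P sigma b) x y).
Local Notation Phi := (FUntil a x y b).

Lemma run_counter_value (c : C) i :
  a_t (at_loc P (sigma i)) = TypR ->
  (forall l', l' < sigma i -> a_u (at_loc P l') c = 0%R) ->
  (forall l', sigma i <= l' < lenP P -> lab_P P l' a ->
     a_u (at_loc P l') c = (y%:Z - x%:Z)%R) ->
  (forall l', sigma i <= l' < lenP P -> ~~ lab_P P l' a -> a_u (at_loc P l') c = (- x%:Z)%R) ->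
  exists th : nat -> C -> int,
    (forall j g, g \in a_g (at_loc P (sigma j.+1)) -> guard_holds g (th j.+1)) /\
    forall d, th (i + d) c =
      ((y * count_between (run_lab P sigma a) i (i + d))%:Z - (x * d)%:Z)%R.
Proof.
move=> hR h0 hya hxa; have [th [th0 thS]] := run_counters run.
exists th; split=> [j g | ]; first by have [_] := thS j; apply.
have hlt := run_lt run (lenP_gt0 comps P_gt0).
have hz : forall j, j <= i -> th j c = 0%R.
  elim=> [|j IH] hj; first by rewrite th0.
  have [-> _] := thS j; rewrite IH ?h0 ?addr0 //; last exact: ltnW.
  exact: (run_before_row run hR).
elim=> [|d IH]; first by rewrite addn0 hz // count_between_geq // !muln0 subr0.
have hge : sigma i <= sigma (i + d).
  case: d {IH} => [|d]; first by rewrite addn0.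
  by apply/ltnW/(run_after_row run hR); rewrite addnS ltnS leq_addr.
rewrite addnS; have [-> _] := thS (i + d).
rewrite /= IH count_betweenSr ?leq_addr // mulnDr mulnSr.
case hA : (run_lab P sigma a (i + d)).
  by rewrite hya ?hge ?hlt //=; lia.
have hna : ~~ lab_P P (sigma (i + d)) a by move: hA; rewrite /run_lab => ->.
by rewrite hxa ?hge ?hlt //=; lia.
Qed.

Lemma until_lab_counter (c : C) i :
  a_t (at_loc P (sigma i)) = TypR ->
  (forall l', l' < sigma i -> a_u (at_loc P l') c = 0%R) ->
  (forall l', sigma i <= l' < lenP P -> lab_P P l' a ->
     a_u (at_loc P l') c = (y%:Z - x%:Z)%R) ->
  (forall l', sigma i <= l' < lenP P -> ~~ lab_P P l' a -> a_u (at_loc P l') c = (- x%:Z)%R) ->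
  (~~ lab_P P (sigma i) Phi -> ~~ lab_P P (sigma i) b /\
     forall l', sigma i < l' < lenP P -> lab_P P l' b -> (c, false) \in a_g (at_loc P l')) ->
  (lab_P P (sigma i) Phi -> exists l', sigma i < l' < lenP P /\ lab_P P l' b /\
     (c, true) \in a_g (at_loc P l')) ->
  (U i <-> lab_P P (sigma i) Phi).
Proof.
move=> hR h0 hya hxa hneg hpos; have [th [hg hth]] := run_counter_value hR h0 hya hxa.
have hlt := run_lt run (lenP_gt0 comps P_gt0).
case hL : (lab_P P (sigma i) Phi); split=> // H.
  have [l' [/andP [hl1 hl2] [hlb hgd]]] := hpos hL.
  have [j' hj'] := run_visits run hl2.
  have hij : i < j'.
    rewrite ltnNge leq_eqVlt; apply/negP => /orP [/eqP e | /(run_before_row run hR)].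
      by rewrite e in hj'; lia.
    by rewrite hj'; lia.
  have ej : j' = (j'.-1).+1 by rewrite prednK //; lia.
  right; exists j'.-1; apply/and3P; split; first lia.
    by rewrite -ej /run_lab hj'.
  have := hg j'.-1 _ (_ : (c, true) \in _); rewrite -ej hj' => /(_ hgd).
  by rewrite /guard_holds /= -(subnKC (ltnW hij)) hth subr_ge0 lez_nat subnKC // ltnW.
have [hnb hall] := hneg (negbT hL).
case: H => [hB | [k /and3P [h1 h2 h3]]]; first by rewrite /run_lab in hB; rewrite hB in hnb.
have hk : sigma i < sigma k.+1 by apply: (run_after_row run hR); lia.
have := hg k _ (hall _ _ h2); rewrite ?hk ?hlt // /guard_holds /=.
by rewrite -(subnKC (leqW h1)) hth subr_lt0 ltz_nat subnKC ?leqW //; lia.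
Qed.

Lemma run_last_loop_lab : exists j0, forall f m,
  run_lab P sigma f (j0 + m) = lab_P P (startP P (lastc P) + m %% size (compP P (lastc P))) f.
Proof.
set k := lastc P; have hk : k < size P by rewrite /k /lastc; lia.
have hp := comp_gt0 comps hk.
have hkS : startP P k.+1 = lenP P by rewrite startP_oversize // /k /lastc; lia.
have hlt := run_lt run (lenP_gt0 comps P_gt0).
have hk0 : startP P k < lenP P by rewrite -hkS startPS //; lia.
have [j0 hj0] := run_visits run hk0; exists j0 => f m.
by rewrite (run_lab_block run (periodic_slice1 (fun _ => True) hk) hk (leqnn k) hp
  (_ : sigma j0 = startP P k + 0)) ?addn0 ?hkS.
Qed.

Lemma until_good_last_loop i : good a x y (compP P (lastc P)) ->
  (exists l', inloc P (lastc P) l' /\ lab_P P l' b) -> U i.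
Proof.
move=> hg [l' [hin hlb]]; have [j0 pat] := run_last_loop_lab.
move: hg hin pat; set k := lastc P; set p := size (compP P k) => hg hin pat.
have hk : k < size P by rewrite /k /lastc; lia.
have hp : 0 < p := comp_gt0 comps hk.
have per : forall E, periodic_on (run_lab P sigma a) (run_lab P sigma b) p j0 E.
  by move=> E j hj _; rewrite -(subnKC hj) -addnA !pat modnDr.
set c := count_between (run_lab P sigma a) j0 (j0 + p).
have hgc : x * p < y * c.
  by rewrite /c (count_between_component (a := a)) // => m hm; rewrite pat modn_small.
set t' := l' - startP P k.
have ht' : t' < p by move: hin => /andP [h1 h2]; lia.
(* [M] periods of the good loop gain at least [M] over the ratio [x/y], which pays for
   the prefix [[i, j1)] and for the last incomplete period. *)
set j1 := j0 + i * p; set M := x * (j1 - i) + x * p + 1; set T := j1 + M * p + t'.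
have hip : i <= i * p by rewrite leq_pmulr.
have hMp : M <= M * p by rewrite leq_pmulr // addn1.
have eT : T = j0 + ((i + M) * p + t') by rewrite /T /j1 mulnDl; lia.
right; exists T.-1; rewrite /until_witness prednK; last by rewrite /T; lia.
apply/and3P; split; first by rewrite /T /j1; lia.
  rewrite eT pat modnMDl modn_small // /t' addnC subnK //.
  by move: hin => /andP [].
have hcnt : M * c <= count_between (run_lab P sigma a) i T.
  rewrite (@count_between_cat _ i j1 T); [|rewrite /j1; lia|rewrite /T; lia].
  rewrite (@count_between_cat _ j1 (j1 + M * p) T); [|lia|rewrite /T; lia].
  rewrite (count_periods hp (per (T + p))); [lia|rewrite /j1; lia|rewrite /T; lia].
have h1 : M * (x * p).+1 <= M * (y * c) by rewrite leq_mul2l hgc orbT.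
have h2 : y * (M * c) <= y * count_between (run_lab P sigma a) i T.
  by rewrite leq_mul2l hcnt orbT.
have h3 : x * t' <= x * p by rewrite leq_mul2l ltnW ?orbT.
have -> : T - i = (j1 - i) + M * p + t' by rewrite /T /j1; lia.
rewrite !mulnDr mulnCA; rewrite mulnCA in h2; rewrite mulnS in h1.
have hMdef : M = x * (j1 - i) + x * p + 1 by [].
clearbody M; lia.
Qed.

Lemma run_component_order k k' i i' : k < k' -> k < size P ->
  inloc P k (sigma i) -> inloc P k' (sigma i') -> i < i'.
Proof.
move=> hkk hk /andP [_ hi] /andP [hi' _]; rewrite ltnNge; apply/negP => hle.
have := run_stays_after run hi' hle; have := leq_startP P hkk.
by rewrite startPS //; lia.
Qed.

Local Notation L := (fun f => f = a \/ f = b \/ f = Phi).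

Section PeriodicComponent.
Variables (k k' i : nat).
Hypotheses (hk : k < size P) (hin : inloc P k (sigma i)) (hk' : k' < size P).
Hypothesis IH : forall i', inloc P k' (sigma i') -> (U i' <-> lab_P P (sigma i') Phi).
Local Notation t := (sigma i - startP P k).

Let hsi : sigma i = startP P k + t.
Proof. by move: hin => /andP [h1 _]; rewrite subnKC. Qed.

Let ht : t < size (compP P k).
Proof. by move: hin => /andP [h1 h2]; lia. Qed.

Let visit_offset : size (compP P k') = size (compP P k) ->
  exists2 i', sigma i' = startP P k' + t & inloc P k' (sigma i').
Proof.
move=> e; have hlt : startP P k' + t < lenP P.
  by apply: leq_trans (startP_leq_lenP P k'.+1); rewrite startPS // e ltn_add2l.
have [i' hi'] := run_visits run hlt.
by exists i'; rewrite // /inloc hi' e leq_addr /= ltn_add2l.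
Qed.

Lemma until_lab_last_loop : k = lastc P -> k' < k -> periodic L (slice P k' k) ->
  (U i <-> lab_P P (sigma i) Phi).
Proof.
move=> hkl hkk HP; have hkk' : k' <= k <= k by rewrite (ltnW hkk) leqnn.
have e := periodic_slice_size HP hkk' hk.
have [i' hi' hin'] := visit_offset (esym e).
have hii := run_component_order hkk hk' hin' hin.
have hall : forall j, sigma j < startP P k.+1.
  by move=> j; rewrite startP_oversize ?(run_lt run (lenP_gt0 comps P_gt0)) // hkl /lastc; lia.
have eq f m : L f -> run_lab P sigma f (i' + m) = run_lab P sigma f (i + m).
  move=> hf; apply: (run_lab_shift_last run HP hk (ltnW hkk) hall _ hi' hsi (ltnW hii) hf).
  by rewrite -e ht.
rewrite hsi (periodic_slice_lab HP hkk' hk) -?e ?ht //; last by right; right.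
rewrite -hi' -IH //; split; apply: until_shift => m; rewrite !eq //; tauto.
Qed.

Let La : L a. Proof. by left. Qed.
Let Lb : L b. Proof. by right; left. Qed.

Lemma until_lab_earlier : k.+1 < size P -> k' < k -> periodic L (slice P k' k.+1) ->
  lab_P P (sigma i) Phi = (y * cnt_lab a (compP P k) < x * size (compP P k)) ->
  (U i <-> lab_P P (sigma i) Phi).
Proof.
move=> hkS hkk HP hL; have hkk' : k' <= k <= k.+1 by rewrite (ltnW hkk) leqnSn.
have e := periodic_slice_size HP hkk' hkS.
have ec := periodic_slice_cnt_lab HP hkk' hkS La.
have [i' hi' hin'] := visit_offset (esym e).
have hii := run_component_order hkk hk' hin' hin.
have ht' : t < size (compP P k') by rewrite -e ht.
have hL' : lab_P P (sigma i') Phi = lab_P P (sigma i) Phi.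
  by rewrite hi' [in RHS]hsi (periodic_slice_lab HP hkk' hkS) -?e ?ht //; tauto.
rewrite e ec in hL.
case: (ltnP (y * cnt_lab a (compP P k')) (x * size (compP P k'))) hL => hb hL.
  rewrite hL; split=> // _.
  apply: (until_repeat_visit_fwd run HP hkS hkk ht' hi' hsi hii La Lb (ltnW hb)).
  by apply/IH; rewrite // hL' hL.
rewrite hL; split=> // /(until_repeat_visit_back run HP hkS hkk ht' hi' hsi hii La Lb hb).
by rewrite IH // hL' hL.
Qed.

Lemma until_lab_later : k < k' -> k'.+1 < size P -> periodic L (slice P k k'.+1) ->
  lab_P P (sigma i) Phi = (x * size (compP P k) <= y * cnt_lab a (compP P k)) ->
  (U i <-> lab_P P (sigma i) Phi).
Proof.
move=> hkk hkS HP hL; have hkk' : k <= k' <= k'.+1 by rewrite (ltnW hkk) leqnSn.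
have e := periodic_slice_size HP hkk' hkS.
have [i' hi' hin'] := visit_offset e.
have hii := run_component_order hkk hk hin hin'.
have hL' : lab_P P (sigma i') Phi = lab_P P (sigma i) Phi.
  by rewrite hi' [in RHS]hsi (periodic_slice_lab HP hkk' hkS) ?ht //; tauto.
case: (leqP (x * size (compP P k)) (y * cnt_lab a (compP P k))) hL => hg hL.
  rewrite hL; split=> // _.
  apply: (until_repeat_visit_back run HP hkS hkk ht hsi hi' hii La Lb hg).
  by apply/IH; rewrite // hL' hL.
rewrite hL; split=> // /(until_repeat_visit_fwd run HP hkS hkk ht hsi hi' hii La Lb (ltnW hg)).
by rewrite IH // hL' hL.
Qed.

End PeriodicComponent.

Lemma until_lab_periodic k k' i : k < size P -> inloc P k (sigma i) -> k' < size P ->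
  (forall i', inloc P k' (sigma i') -> (U i' <-> lab_P P (sigma i') Phi)) ->
  (k = lastc P -> k' < k /\ periodic L (slice P k' k)) ->
  (k <> lastc P ->
     (good a x y (compP P k) \/ neutral a x y (compP P k)) /\ ~~ lab_P P (sigma i) Phi
     \/ bad a x y (compP P k) /\ lab_P P (sigma i) Phi ->
     k' < k /\ periodic L (slice P k' k.+1)) ->
  (k <> lastc P ->
     (good a x y (compP P k) \/ neutral a x y (compP P k)) /\ lab_P P (sigma i) Phi
     \/ bad a x y (compP P k) /\ ~~ lab_P P (sigma i) Phi ->
     k < k' /\ k' <> lastc P /\ periodic L (slice P k k'.+1)) ->
  (U i <-> lab_P P (sigma i) Phi).
Proof.
move=> hk hin hk' IH H1 H2 H3.
have [hkl | /eqP hkl] := eqVneq k (lastc P).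
  by have [hkk HP] := H1 hkl; apply: (until_lab_last_loop hk hin hk' IH hkl hkk HP).
have hkS : k.+1 < size P by move/eqP: hkl; rewrite /lastc; lia.
have good_neutral : x * size (compP P k) <= y * cnt_lab a (compP P k) ->
    good a x y (compP P k) \/ neutral a x y (compP P k).
  by rewrite leq_eqVlt => /orP [/eqP | ]; [right | left].
case/orP: (orbN (lab_P P (sigma i) Phi)) => hL;
  case: (leqP (x * size (compP P k)) (y * cnt_lab a (compP P k))) => hg.
- have [hkk [hk'l HP]] := H3 hkl (or_introl (conj (good_neutral hg) hL)).
  apply: (until_lab_later hk hin hk' IH hkk _ HP); last by rewrite hL hg.
  by move: hk'l; rewrite /lastc; lia.
- have [hkk HP] := H2 hkl (or_intror (conj hg hL)).
  by apply: (until_lab_earlier hk hin hk' IH hkS hkk HP); rewrite hL hg.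
- have [hkk HP] := H2 hkl (or_introl (conj (good_neutral hg) hL)).
  by apply: (until_lab_earlier hk hin hk' IH hkS hkk HP); rewrite (negbTE hL) ltnNge hg.
have [hkk [hk'l HP]] := H3 hkl (or_intror (conj hg hL)).
apply: (until_lab_later hk hin hk' IH hkk _ HP); last by rewrite (negbTE hL) leqNgt hg.
by move: hk'l; rewrite /lastc; lia.
Qed.

End UntilClauses.

Section UntilConsistencyInd.
Variables (AP C : finType) (K : kripke AP) (P : seq (seq (astate AP (kS K) C))).
Variable Q : fltl AP -> nat -> Prop.
Hypothesis Qa : forall a x y b k l, k < size P -> inloc P k l ->
  lab_P P l (FUntil a x y b) -> lab_P P l b -> Q (FUntil a x y b) l.
Hypothesis Qb : forall a x y b k l, k < size P -> inloc P k l ->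
  lab_P P l (FUntil a x y b) -> good a x y (compP P (lastc P)) ->
  (exists l', inloc P (lastc P) l' /\ lab_P P l' b) -> Q (FUntil a x y b) l.
Hypothesis Qc : forall a x y b k l, k < size P -> inloc P k l -> a_t (at_loc P l) = TypR ->
  (exists c : C,
    (forall l', l' < l -> a_u (at_loc P l') c = 0%R) /\
    (forall l', l <= l' < lenP P -> lab_P P l' a -> a_u (at_loc P l') c = (y%:Z - x%:Z)%R) /\
    (forall l', l <= l' < lenP P -> ~~ lab_P P l' a -> a_u (at_loc P l') c = (- x%:Z)%R) /\
    (~~ lab_P P l (FUntil a x y b) ->
       ~~ lab_P P l b /\
       forall l', l < l' < lenP P -> lab_P P l' b -> (c, false) \in a_g (at_loc P l')) /\
    (lab_P P l (FUntil a x y b) ->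
       exists l', l < l' < lenP P /\ lab_P P l' b /\ (c, true) \in a_g (at_loc P l'))) ->
  Q (FUntil a x y b) l.
Hypothesis Qd : forall a x y b k l k', k < size P -> inloc P k l -> k' < size P ->
  (forall l', inloc P k' l' -> Q (FUntil a x y b) l') ->
  (k = lastc P -> k' < k /\
     periodic (fun f => f = a \/ f = b \/ f = FUntil a x y b) (slice P k' k)) ->
  (k <> lastc P ->
     ((good a x y (compP P k) \/ neutral a x y (compP P k)) /\ ~~ lab_P P l (FUntil a x y b)
      \/ bad a x y (compP P k) /\ lab_P P l (FUntil a x y b)) ->
     k' < k /\ periodic (fun f => f = a \/ f = b \/ f = FUntil a x y b) (slice P k' k.+1)) ->
  (k <> lastc P ->
     ((good a x y (compP P k) \/ neutral a x y (compP P k)) /\ lab_P P l (FUntil a x y b)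
      \/ bad a x y (compP P k) /\ ~~ lab_P P l (FUntil a x y b)) ->
     k < k' /\ k' <> lastc P /\
     periodic (fun f => f = a \/ f = b \/ f = FUntil a x y b) (slice P k k'.+1)) ->
  Q (FUntil a x y b) l.

(* The induction principle generated for [lcons] has no hypothesis for the nested
   occurrence of [lcons] in clause (d). *)
Fixpoint lcons_until_ind f l (H : lcons P f l) {struct H} :
  if f is FUntil _ _ _ _ then Q f l else True :=
  match H in lcons _ f0 l0 return if f0 is FUntil _ _ _ _ then Q f0 l0 else True with
  | lc_atom _ _ _ _ _ _ _ | lc_and _ _ _ _ _ _ _ _ | lc_neg _ _ _ _ _ _ _
  | lc_next _ _ _ _ _ _ _ => I
  | lc_until_a _ _ _ _ _ _ hk hl _ hU hb => Qa hk hl hU hb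
  | lc_until_b _ _ _ _ _ _ hk hl _ hU hg hb => Qb hk hl hU hg hb
  | lc_until_c _ _ _ _ _ _ hk hl _ hR hc => Qc hk hl hR hc
  | lc_until_d _ _ _ _ _ _ hk hl _ (ex_intro k' (conj hk' (conj Hall (conj e1 (conj e2 e3))))) =>
      Qd hk hl hk' (fun l' hl' => lcons_until_ind (Hall l' hl')) e1 e2 e3
  end.

End UntilConsistencyInd.

Section Correctness.
Variables (AP C : finType) (K : kripke AP) (P : seq (seq (astate AP (kS K) C))).
Hypothesis comps : forall k, k < size P -> is_row (compP P k) \/ is_loop (compP P k).
Hypothesis P_gt0 : 0 < size P.
Variable sigma : nat -> nat.
Hypothesis run : runs P sigma.

Lemma lcons_subs_ok f l : lcons P f l -> subs_ok P (lcons P) f.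
Proof. by case. Qed.

Lemma consistent_child f g : consistent P f -> child g f -> consistent P g.
Proof.
move=> H hg l hl; have := lcons_subs_ok (H 0 (lenP_gt0 comps P_gt0)).
by apply; rewrite //; exists g; split=> //; apply: subf_refl.
Qed.

Lemma lcons_atomE p l : lcons P (FAtom p) l ->
  (lab_P P l (FAtom p) <-> p \in klab K (a_st (at_loc P l))).
Proof. by inversion 1. Qed.

Lemma lcons_andE f g l : lcons P (FAnd f g) l ->
  (lab_P P l (FAnd f g) <-> lab_P P l f /\ lab_P P l g).
Proof. by inversion 1. Qed.

Lemma lcons_negE f l : lcons P (FNeg f) l -> (lab_P P l (FNeg f) <-> ~~ lab_P P l f).
Proof. by inversion 1. Qed.

Lemma lcons_nextE f l : lcons P (FNext f) l ->
  forall l', cs_edge P l l' -> (lab_P P l (FNext f) <-> lab_P P l' f).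
Proof. by inversion 1. Qed.

Theorem consistent_sat f : consistent P f ->
  forall i, fsat (stP P sigma) f i <-> lab_P P (sigma i) f.
Proof.
have hlt := run_lt run (lenP_gt0 comps P_gt0).
elim: f => [p|f1 IH1 f2 IH2|f1 IH1|f1 IH1|a IHa x y b IHb] Hcons i.
- by symmetry; apply: lcons_atomE; apply: Hcons.
- have Hf := lcons_andE (Hcons _ (hlt i)).
  have C1 := consistent_child Hcons (or_introl erefl).
  have C2 := consistent_child Hcons (or_intror erefl).
  by rewrite /= IH1 // IH2 //; split=> [? | /Hf //]; apply/Hf.
- have Hf := lcons_negE (Hcons _ (hlt i)).
  have C1 := consistent_child Hcons (erefl f1).
  by rewrite /= IH1 //; split=> [/negP ? | /Hf /negP //]; apply/Hf.
- have C1 := consistent_child Hcons (erefl f1).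
  by rewrite /= IH1 // (lcons_nextE (Hcons _ (hlt i)) (run_edge run i)).
have Ha := IHa (consistent_child Hcons (or_introl erefl)).
have Hb := IHb (consistent_child Hcons (or_intror erefl)).
rewrite (fsat_until_at _ _ _ Ha Hb).
pose Q g l := g = FUntil a x y b -> forall i, sigma i = l ->
  (until_at (run_lab P sigma a) (run_lab P sigma b) x y i <-> lab_P P l g).
suff : Q (FUntil a x y b) (sigma i) by move/(_ erefl i erefl).
apply: (lcons_until_ind (Q := Q)) (Hcons _ (hlt i)).
- move=> a' x' y' b' k l _ _ hL hb [<- <- <- <-] j hj.
  by rewrite hL; split=> // _; left; rewrite /run_lab hj.
- move=> a' x' y' b' k l _ _ hL hg hex [<- <- <- <-] j hj.
  by rewrite hL; split=> // _; apply: (until_good_last_loop comps P_gt0 run).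
- move=> a' x' y' b' k l _ _ hR [c [h1 [h2 [h3 [h4 h5]]]]] [ea ex ey eb] j hj.
  subst a' x' y' b' l.
  exact: (until_lab_counter comps P_gt0 run hR h1 h2 h3 h4 h5).
move=> a' x' y' b' k l k' hk hin hk' IH e1 e2 e3 [ea ex ey eb] j hj.
subst a' x' y' b' l.
apply: (until_lab_periodic comps P_gt0 run hk hin hk' _ e1 e2 e3).
by move=> i' hi'; apply: (IH _ hi' erefl i' erefl).
Qed.

End Correctness.

Lemma uvw_periodic u v n w j : size u <= j -> j + size v < size u + n * size v ->
  uvw u v n w (j + size v) = uvw u v n w j.
Proof.
move=> h1 h2; rewrite /uvw ltnNge (leq_trans h1 (leq_addr _ _)) /= h2.
by rewrite ltnNge h1 /= (leq_ltn_trans (leq_addr _ _) h2) addnC -addnBA // modnDl.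
Qed.

Theorem lemma8 (AP C : finType) (K : kripke AP) (phi psi : fltl AP) (x y : nat)
    (P : seq (seq (astate AP (kS K) C))) :
  flat K ->
  wf_form (FUntil phi x y psi) ->
  is_aps P (FUntil phi x y psi) ->
  consistent P phi -> consistent P psi ->
  forall k, k < lastc P -> is_loop (compP P k) ->
  forall sigma : nat -> nat, runs P sigma ->
  forall (u : seq nat) (n : nat) (w : nat -> nat),
    size (compP P k) * y + 2 <= n ->
    (forall i, sigma i = uvw u (locs P k) n w i) ->
    exists n1 n2,
      n = n1 + size (compP P k) * y + n2 /\
      forall i,
        (size u <= i < size u + (n1 - 1) * size (compP P k)
         \/ size u + (n1 + size (compP P k) * y) * size (compP P k) <= i
              < size u + (n1 + size (compP P k) * y + n2 - 2) * size (compP P k)) ->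
        (sat_P P sigma (FUntil phi x y psi) i <->
         sat_P P sigma (FUntil phi x y psi) (i + size (compP P k))).
Proof.
move=> _ [_ [hy _]] [hP [comps _]] Cphi Cpsi k _ [hp _] sigma run u n w hn hsig.
have per : periodic_on (run_lab P sigma phi) (run_lab P sigma psi) (size (compP P k))
    (size u) (size u + n * size (compP P k) - 1).
  have e : size (locs P k) = size (compP P k) by rewrite size_iota.
  by move=> j hj hjE; rewrite /run_lab !hsig -e uvw_periodic // e; lia.
have [n1 [n2 [en stable]]] := until_periods_stable x hp hy per hn.
exists n1, n2; split=> // i hi.
by rewrite /sat_P !(fsat_until_at _ _ _ (consistent_sat comps hP run Cphi)
  (consistent_sat comps hP run Cpsi)); apply: stable.
Qed.
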